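(* Let $0<\delta<1/1000$, let $x$ be large, let $D=x^{7/12-50\delta}$, let $x^{2\delta} \le N\le x^{1/3+\delta/2}$ and let $d\in\mathcal{D}^+(D)$. Then there is a factorization $d=d_1d_2d_3$ into positive integers such that \begin{align*} d_1&\le\frac{N}{x^\delta},\\ N^2d_2d_3^2&\le x^{1-\delta},\\ N^2d_1d_2^4d_3^3&\le x^{2-\delta},\\ N d_1d_2^5d_3^2&\le x^{2-\delta}. \end{align*}
   Context: For $D\ge 1$, the support set of the upper bound linear sieve weights of level $D$ is \[ \mathcal{D}^+(D):=\Bigl\{p_1\cdots p_r:\ p_1\ge p_2\ge \dots \ge p_r \text{ primes},\ \ p_1\cdots p_{2j}\,p_{2j+1}^3\le D\ \text{ for all } 0\le j<r/2\Bigr\} \] (with $r\ge 0$, the empty product being $1$). *)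

From Stdlib Require Import Reals.
From mathcomp Require Import all_boot.

Definition prodn (s : seq nat) : nat := foldr muln 1%N s.

(* d lies in the support D^+(D) of the upper bound linear sieve weights of level D:
   d = p_1 ... p_r with p_1 >= ... >= p_r primes and
   p_1 ... p_{2j} p_{2j+1}^3 <= D for all 0 <= j < r/2 (i.e. 2j+1 <= r).
   The list s = [p_1; ...; p_r] (0-indexed: p_{2j+1} = nth 0 s (2j)). *)
Definition in_Dplus (D : R) (d : nat) : Prop :=
  exists s : seq nat,
    all prime s /\ sorted geq s /\ prodn s = d /\
    forall j : nat, (2 * j < size s)%N ->
      Rle (INR (prodn (take (2 * j) s) * (nth 0%N s (2 * j)) ^ 3)) D.

From Stdlib Require Import Reals Lra.
From mathcomp Require Import all_boot.
Open Scope R_scope.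

(* Measure everything in powers of x: N = x^nu, and each prime p | d has
   exponent t = log p / log x.  Membership d in D^+(x^theta), theta =
   7/12 - 50 delta, says that the exponents t_1 >= t_2 >= ... >= 0 of the
   primes of d form a "sieve profile": t_1 + ... + t_2j + 3 t_(2j+1) <= theta.
   The four required inequalities become a linear "target system" in nu and
   the exponents a, b, c of d1, d2, d3.
   The factorization is found by a greedy sweep through the primes in
   decreasing order: a prime joins d1 while d1 stays below N / x^delta,
   otherwise d3 while the second inequality stays true, otherwise d2. *)

Definition rsum (l : seq R) : R := foldr Rplus 0 l.

Lemma rsum_cat l1 l2 : rsum (l1 ++ l2) = rsum l1 + rsum l2.
Proof. elim: l1 => [|x l IH] /=; rewrite ?IH; lra. Qed.

Lemma rsum_take_S k l : rsum (take k.+1 l) = rsum (take k l) + nth 0 l k.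
Proof.
elim: l k => [|x l IH] [|k] /=; rewrite ?take0 /=; try lra.
rewrite IH; lra.
Qed.

Lemma prodn_cat s1 s2 : prodn (s1 ++ s2) = (prodn s1 * prodn s2)%N.
Proof. by elim: s1 => [|p s1 IH] /=; rewrite ?mul1n ?IH ?mulnA. Qed.

Lemma prodn_gt0 s : all (fun p => 0 < p)%N s -> (0 < prodn s)%N.
Proof. by elim: s => [|p s IH] //= /andP [Hp Hs]; rewrite muln_gt0 Hp IH. Qed.

Lemma INR_gt0 n : (0 < n)%N -> 0 < INR n.
Proof. by move=> Hn; apply: lt_0_INR; apply/ltP. Qed.

(* A labelling [cs : seq 'I_3] sends the i-th entry of a list to the factor
   d1, d2 or d3; [part k cs s] collects the entries sent to factor [k]. *)
Definition L1 : 'I_3 := @Ordinal 3 0 isT.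
Definition L2 : 'I_3 := @Ordinal 3 1 isT.
Definition L3 : 'I_3 := @Ordinal 3 2 isT.

Definition part {T : Type} (k : 'I_3) (cs : seq 'I_3) (s : seq T) : seq T :=
  mask [seq c == k | c <- cs] s.

Lemma part_cons {T : Type} k c cs (x : T) s :
  part k (c :: cs) (x :: s) = if c == k then x :: part k cs s else part k cs s.
Proof. by rewrite /part /=; case: (c == k). Qed.

Lemma prodn_parts cs s : (size s <= size cs)%N ->
  prodn s = (prodn (part L1 cs s) * prodn (part L2 cs s) * prodn (part L3 cs s))%N.
Proof.
elim: s cs => [|x s IH] [|c cs] //= Hsz.
rewrite !part_cons (IH cs Hsz).
case: c => [[|[|[|]]] ?] //=.
- by rewrite !mulnA.
- by rewrite !mulnA (mulnC x).
- by rewrite mulnCA.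
Qed.

Lemma part_map {T1 T2 : Type} (f : T1 -> T2) k cs s :
  map f (part k cs s) = part k cs (map f s).
Proof. exact: map_mask. Qed.

Lemma rsum_part_pad k cs l n : (size l <= size cs)%N ->
  rsum (part k cs (l ++ nseq n 0)) = rsum (part k (take (size l) cs) l).
Proof.
move=> Hsz; rewrite -{1}(cat_take_drop (size l) cs) /part map_cat mask_cat; last first.
  by rewrite size_map size_takel.
rewrite rsum_cat.
have -> : rsum (mask [seq c == k | c <- drop (size l) cs] (nseq n 0)) = 0.
  elim: n (drop _ _) => [|n IH] [|c cs'] //=.
  by case: (c == k); rewrite /= IH; lra.
lra.
Qed.

(* Sieve profiles.  [sieve_profile theta l] says that l = [t_1; t_2; ...] is
   nonnegative, nonincreasing, and satisfies the linear sieve support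
   condition t_1 + ... + t_{2j} + 3 t_{2j+1} <= theta for every j (entries past
   the end of l read as 0).  These are the logarithms of the primes of a
   d in D^+(x^theta), measured in units of log x. *)
Definition sieve_profile (theta : R) (l : seq R) : Prop :=
  (forall i, 0 <= nth 0 l i) /\ (forall i, nth 0 l i.+1 <= nth 0 l i) /\
  (forall j, rsum (take (2 * j) l) + 3 * nth 0 l (2 * j) <= theta).

Section Profile.
Context {theta : R} {l : seq R}.
Hypothesis Hl : sieve_profile theta l.

Lemma profile_ge0 i : 0 <= nth 0 l i.
Proof. by case: Hl. Qed.

Lemma profile_mono i k : nth 0 l (i + k) <= nth 0 l i.
Proof.
case: Hl => [_ [Hs _]]; elim: k => [|k IH]; first by rewrite addn0; lra.
have := Hs (i + k)%N; rewrite addnS; lra.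
Qed.

Lemma profile_prefix k : rsum (take k l) + 2 * nth 0 l k <= theta.
Proof.
case: Hl => [Hn [Hs Hv]].
rewrite -[k](odd_double_half k) -muln2 mulnC; case: (odd k) => /=.
- rewrite add1n rsum_take_S.
  have := Hv k./2; have := Hs (2 * k./2)%N; have := Hn (2 * k./2)%N; lra.
- rewrite add0n. have := Hv k./2; have := Hn (2 * k./2)%N; lra.
Qed.

Lemma profile_sum : rsum l <= theta.
Proof.
have := profile_prefix (size l).
rewrite take_oversize // nth_default //; have := profile_ge0 0; lra.
Qed.

Lemma profile_pad n : sieve_profile theta (l ++ nseq n 0).
Proof.
have nth_pad i : nth 0 (l ++ nseq n 0) i = nth 0 l i.
  by rewrite nth_cat nth_nseq; case: ltnP => // Hi; rewrite nth_default //; case: ifP.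
have take_pad k : rsum (take k (l ++ nseq n 0)) = rsum (take k l).
  rewrite take_cat; case: ltnP => // Hk.
  rewrite rsum_cat (take_oversize Hk).
  suff -> : forall m s, rsum (take m (nseq s 0)) = 0 by lra.
  by elim=> [|m IH] [|s] /=; rewrite ?IH; lra.
case: Hl => [Hn [Hs Hv]]; split; [|split] => *; rewrite ?nth_pad ?take_pad //.
Qed.

End Profile.

Lemma profile_of_bounded theta l : 0 <= theta ->
  (forall i, 0 <= nth 0 l i) -> (forall i, nth 0 l i.+1 <= nth 0 l i) ->
  (forall j, (2 * j < size l)%N -> rsum (take (2 * j) l) + 3 * nth 0 l (2 * j) <= theta) ->
  sieve_profile theta l.
Proof.
move=> Htheta Hn Hs Hv; split; [done|split; [done|]] => j.
case: (ltnP (2 * j) (size l)) => Hj; first exact: Hv.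
rewrite take_oversize // nth_default // Rmult_0_r Rplus_0_r.
case E: (size l) => [|n]; first by move/size0nil: E => ->.
(* the last condition that occurs, at j0 = n/2, covers the whole list *)
set j0 := n./2.
have Hj0 : (2 * j0 < size l)%N.
  by rewrite E -[n in (_ < n.+1)%N](odd_double_half n) -/j0 mul2n ltnS leq_addl.
have Hsz : (size l <= (2 * j0).+2)%N.
  by rewrite E -[n in (n.+1 <= _)%N](odd_double_half n) -/j0 mul2n ltnS; case: (odd n).
have -> : rsum l = rsum (take (2 * j0).+2 l) by rewrite take_oversize.
have := Hv _ Hj0; rewrite !rsum_take_S.
have := Hs (2 * j0)%N; have := Hn (2 * j0).+1; have := Hn (2 * j0)%N; lra.
Qed.

Fixpoint sweep (r1 r3 : R) (l : seq R) : seq 'I_3 :=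
  match l with
  | [::] => [::]
  | t :: l' => if Rle_dec t r1 then L1 :: sweep (r1 - t) r3 l'
               else if Rle_dec t r3 then L3 :: sweep r1 (r3 - t) l'
               else L2 :: sweep r1 r3 l'
  end.

Lemma size_sweep r1 r3 l : size (sweep r1 r3 l) = size l.
Proof.
elim: l r1 r3 => [|t l IH] r1 r3 //=.
by case: Rle_dec => ?; [|case: Rle_dec => ?]; rewrite /= IH.
Qed.

Definition swept (k : 'I_3) (r1 r3 : R) (l : seq R) : R :=
  rsum (part k (sweep r1 r3 l) l).

Lemma sweep_step r1 r3 t l :
  (t <= r1 /\ swept L1 r1 r3 (t :: l) = t + swept L1 (r1 - t) r3 l /\
     swept L2 r1 r3 (t :: l) = swept L2 (r1 - t) r3 l /\
     swept L3 r1 r3 (t :: l) = swept L3 (r1 - t) r3 l) \/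
  (r1 < t /\ t <= r3 /\ swept L1 r1 r3 (t :: l) = swept L1 r1 (r3 - t) l /\
     swept L2 r1 r3 (t :: l) = swept L2 r1 (r3 - t) l /\
     swept L3 r1 r3 (t :: l) = t + swept L3 r1 (r3 - t) l) \/
  (r1 < t /\ r3 < t /\ swept L1 r1 r3 (t :: l) = swept L1 r1 r3 l /\
     swept L2 r1 r3 (t :: l) = t + swept L2 r1 r3 l /\
     swept L3 r1 r3 (t :: l) = swept L3 r1 r3 l).
Proof.
rewrite /swept /part /=; case: Rle_dec => H1 /=; first by left; repeat split; lra.
by case: Rle_dec => H2 /=; right; [left|right]; repeat split; lra.
Qed.

(* The d1-exponent does not depend on the budget of d3, since d1 is served first. *)
Lemma swept1_indep r1 r3 r3' l : swept L1 r1 r3 l = swept L1 r1 r3' l.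
Proof.
elim: l r1 r3 r3' => [|t l IH] r1 r3 r3' //.
have [[? [-> _]] | [[? [? [-> _]]] | [? [? [-> _]]]]] := sweep_step r1 r3 t l;
have [[? [-> _]] | [[? [? [-> _]]] | [? [? [-> _]]]]] := sweep_step r1 r3' t l;
  rewrite ?(IH _ _ r3'); lra.
Qed.

(* Besides the bookkeeping facts, the point is:
   if some entry missed d1, the unused budget of d1 is less than what [l]
   leaves of [theta]; if some entry even missed d3, the two unused budgets
   together are less than that slack plus [h]. *)
Lemma sweep_tail theta h r1 r3 l :
  0 <= r1 -> (forall i, 0 <= nth 0 l i) ->
  (forall k, (k < size l)%N -> rsum (take k l) + 2 * nth 0 l k <= theta) ->
  (forall k, (k < size l)%N -> rsum (take k l) + 3 * nth 0 l k <= theta + h) ->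
  let a := swept L1 r1 r3 l in let b := swept L2 r1 r3 l in
  let c := swept L3 r1 r3 l in
  a <= r1 /\ (c = 0 \/ c <= r3) /\ 0 <= a /\ 0 <= b /\ 0 <= c /\
  a + b + c = rsum l /\
  ((b = 0 /\ c = 0) \/ r1 - a < theta - rsum l) /\
  (b = 0 \/ r3 - c < theta - rsum l + h - (r1 - a)).
Proof.
elim: l theta r1 r3 => [|t l IH] theta r1 r3 Hr1 Hn H2 H3 /=; first by rewrite /swept /=; lra.
have Ht := Hn 0%N; have H20 := H2 0%N isT; have H30 := H3 0%N isT.
rewrite /= in Ht H20 H30.
(* the tail satisfies the same hypotheses with theta lowered by t *)
have Hn' i : 0 <= nth 0 l i by exact: (Hn i.+1).
have H2' k : (k < size l)%N -> rsum (take k l) + 2 * nth 0 l k <= theta - t.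
  by move=> Hk; have := H2 k.+1 Hk; rewrite /=; lra.
have H3' k : (k < size l)%N -> rsum (take k l) + 3 * nth 0 l k <= theta - t + h.
  by move=> Hk; have := H3 k.+1 Hk; rewrite /=; lra.
have [[? [-> [-> ->]]] | [[? [? [-> [-> ->]]]] | [? [? [-> [-> ->]]]]]] :=
  sweep_step r1 r3 t l.
- by have := IH (theta - t) (r1 - t) r3 ltac:(lra) Hn' H2' H3'; rewrite /=; lra.
- by have := IH (theta - t) r1 (r3 - t) Hr1 Hn' H2' H3'; rewrite /=; lra.
- by have := IH (theta - t) r1 r3 Hr1 Hn' H2' H3'; rewrite /=; lra.
Qed.

(* The four required inequalities on the logarithmic scale, for N = x^nu and
   d1 = x^a, d2 = x^b, d3 = x^c. *)
Definition target (delta nu a b c : R) : Prop :=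
  a <= nu - delta /\ 2 * nu + b + 2 * c <= 1 - delta /\
  2 * nu + a + 4 * b + 3 * c <= 2 - delta /\ nu + a + 5 * b + 2 * c <= 2 - delta.

Lemma profile_tail theta t1 t2 t3 t4 tl :
  sieve_profile theta [:: t1, t2, t3, t4 & tl] ->
  let theta' := theta - (t1 + t2 + t3 + t4) in
  (forall i, 0 <= nth 0 tl i) /\
  (forall k, (k < size tl)%N -> rsum (take k tl) + 2 * nth 0 tl k <= theta') /\
  (forall k, (k < size tl)%N -> rsum (take k tl) + 3 * nth 0 tl k <= theta' + nth 0 tl 0).
Proof.
move=> G theta'; split; [|split] => [i|k _|k _].
- exact: (profile_ge0 G i.+4).
- by have := profile_prefix G k.+4; rewrite /= /theta'; lra.
- have := profile_prefix G k.+4; have := profile_mono G 4 k.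
  by rewrite add4n /= /theta'; lra.
Qed.

(* The core of the argument: on a profile of length at least four, the sweep
   with budget nu - delta for d1 and, for d3, the budget that makes the second
   inequality hold exactly when d3 respects it, solves the target system.  The
   verification is a linear-arithmetic case analysis over where the four
   largest entries go, combined with [sweep_tail] for the remaining ones. *)
Lemma sweep_target delta nu t1 t2 t3 t4 tl :
  0 < delta < 1/1000 -> 2 * delta <= nu <= 1/3 + delta/2 ->
  let l := [:: t1, t2, t3, t4 & tl] in
  sieve_profile (7/12 - 50 * delta) l ->
  let r1 := nu - delta in
  let r3 := 1 - delta - 2 * nu - (rsum l - swept L1 r1 0 l) in
  target delta nu (swept L1 r1 r3 l) (swept L2 r1 r3 l) (swept L3 r1 r3 l).
Proof.
move=> Hd Hnu l G r1 r3.
have [Tn [T2 T3]] := profile_tail _ _ _ _ _ _ G.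
have Su := profile_sum G.
have n5 := profile_ge0 G 4.
have m1 := profile_mono G 0 1; have m2 := profile_mono G 1 1.
have m3 := profile_mono G 2 1; have m4 := profile_mono G 3 1.
case: G => [_ [_ Hv]].
have v0 := Hv 0%N; have v1 := Hv 1%N; have v2 := Hv 2%N.
rewrite /= ?mul0n ?take0 /= in n5 m1 m2 m3 m4 v0 v1 v2 Su.
have Ha : swept L1 r1 0 l = swept L1 r1 r3 l by apply: swept1_indep.
have Hr1 : r1 = nu - delta by [].
have Hr3 : r3 = 1 - delta - 2 * nu - (rsum l - swept L1 r1 0 l) by [].
clearbody r1 r3; move: Ha Hr3; rewrite /l /target /= in Su *.
do 4 (match goal with |- context [swept L1 ?r1 ?r3 (?t :: ?l)] =>
  have [[? [-> [-> ->]]] | [[? [? [-> [-> ->]]]] | [? [? [-> [-> ->]]]]]] :=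
    sweep_step r1 r3 t l end);
match goal with |- context [swept L1 ?r1 ?r3 tl] =>
  have := sweep_tail _ _ r1 r3 _ ltac:(lra) Tn T2 T3 end;
rewrite /=; lra.
Qed.

(* Every profile admits a labelling whose three parts solve the target system:
   pad the profile with four zero entries, run the sweep, forget the padding. *)
Lemma profile_split delta nu l :
  0 < delta < 1/1000 -> 2 * delta <= nu <= 1/3 + delta/2 ->
  sieve_profile (7/12 - 50 * delta) l ->
  exists cs, size cs = size l /\
    target delta nu (rsum (part L1 cs l)) (rsum (part L2 cs l)) (rsum (part L3 cs l)).
Proof.
move=> Hd Hnu G.
have Hlong : (4 <= size (l ++ nseq 4 (0 : R)))%N by rewrite size_cat size_nseq leq_addl.
have Gpad := profile_pad G 4.
move: Gpad Hlong; case E: (l ++ nseq 4 (0 : R)) => [|t1 [|t2 [|t3 [|t4 tl]]]] // Gpad _.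
have /= := sweep_target _ _ _ _ _ _ _ Hd Hnu Gpad; rewrite /swept.
set cs := sweep _ _ _ => Hcs.
have Hsz : size cs = (size l + 4)%N by rewrite size_sweep -E size_cat size_nseq.
have Hle : (size l <= size cs)%N by rewrite Hsz leq_addr.
exists (take (size l) cs); split; first exact: size_takel.
by rewrite -!(rsum_part_pad _ _ _ 4 Hle) E.
Qed.

Section LogScale.
Context {x : R}.
Hypothesis Hx : 1 < x.

Let lnx_pos : 0 < ln x.
Proof. by rewrite -ln_1; apply: ln_increasing; lra. Qed.

Lemma Rlog_Rpower y : Rlog x (Rpower x y) = y.
Proof. by rewrite /Rlog ln_Rpower; field; lra. Qed.

Lemma Rpower_Rlog_gt1 u : 0 < u -> Rpower x (Rlog x u) = u.
Proof. by apply: Rpower_Rlog; lra. Qed.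

Lemma Rlog_le u v : 0 < u -> u <= v -> Rlog x u <= Rlog x v.
Proof.
move=> Hu Huv; apply: Rnot_lt_le => /(Rpower_lt _ _ _ Hx).
by rewrite !Rpower_Rlog_gt1 //; lra.
Qed.

Lemma Rlog_mult u v : 0 < u -> 0 < v -> Rlog x (u * v) = Rlog x u + Rlog x v.
Proof. by move=> Hu Hv; rewrite /Rlog ln_mult //; field; lra. Qed.

Lemma Rpower_pow_mult y n : Rpower x y ^ n = Rpower x (INR n * y).
Proof. by rewrite Rmult_comm -Rpower_mult Rpower_pow // /Rpower; apply: exp_pos. Qed.

Lemma Rlog_prodn s : all (fun p => 0 < p)%N s ->
  Rlog x (INR (prodn s)) = rsum (map (fun p => Rlog x (INR p)) s).
Proof.
elim: s => [|p s IH] /=; first by rewrite /Rlog ln_1 /Rdiv Rmult_0_l.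
move=> /andP [Hp Hs].
by rewrite -multE mult_INR Rlog_mult ?IH //; apply: INR_gt0 => //; apply: prodn_gt0.
Qed.

Lemma Rlog_INR_ge0 n : (0 < n)%N -> 0 <= Rlog x (INR n).
Proof.
move=> Hn; rewrite -(Rlog_Rpower 0) Rpower_O; last lra.
by apply: Rlog_le; [lra | apply: (le_INR 1); apply/leP].
Qed.

Lemma Rlog_support theta P q : all (fun p => 0 < p)%N P -> (0 < q)%N ->
  INR (prodn P * q ^ 3) <= Rpower x theta ->
  rsum (map (fun p => Rlog x (INR p)) P) + 3 * Rlog x (INR q) <= theta.
Proof.
move=> HP Hq.
have HPq : all (fun p => 0 < p)%N (P ++ [:: q; q; q]) by rewrite all_cat HP /= Hq.
have -> : (prodn P * q ^ 3)%N = prodn (P ++ [:: q; q; q]).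
  by rewrite prodn_cat /= muln1 !expnS expn0 muln1.
move=> /(Rlog_le _ _ (INR_gt0 _ (prodn_gt0 _ HPq))).
by rewrite Rlog_Rpower Rlog_prodn // map_cat rsum_cat /=; lra.
Qed.

Lemma profile_of_Dplus theta d : 0 <= theta -> in_Dplus (Rpower x theta) d ->
  exists s : seq nat, all prime s /\ prodn s = d /\
    sieve_profile theta (map (fun p => Rlog x (INR p)) s).
Proof.
move=> Htheta [s [Hprime [Hsort [Hd Hcond]]]]; exists s; split=> //; split=> //.
set w := fun p : nat => Rlog x (INR p).
have Hpos : all (fun p => 0 < p)%N s by apply: sub_all Hprime => p; exact: prime_gt0.
have nth_pos i : (i < size s)%N -> (0 < nth 0%N s i)%N by move=> Hi; apply: (all_nthP 0%N Hpos).
have nth_w i : (i < size s)%N -> nth 0 (map w s) i = w (nth 0%N s i).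
  by move=> Hi; rewrite (nth_map 0%N).
have w_ge0 i : 0 <= nth 0 (map w s) i.
  case: (ltnP i (size s)) => Hi; last by rewrite nth_default ?size_map //; lra.
  by rewrite nth_w //; apply/Rlog_INR_ge0/nth_pos.
apply: profile_of_bounded => // [i|j Hj].
- case: (ltnP i.+1 (size s)) => Hi; last by rewrite (nth_default _ (n := i.+1)) ?size_map.
  rewrite !nth_w ?(ltnW Hi) //; apply: Rlog_le; first exact: INR_gt0 (nth_pos _ Hi).
  apply: le_INR; apply/leP.
  have geq_trans : transitive geq by move=> b a c /= h1 h2; exact: leq_trans h2 h1.
  exact: (sorted_ltn_nth geq_trans 0%N Hsort) (ltnW Hi) Hi (ltnSn i).
- rewrite size_map in Hj; rewrite -map_take nth_w //.
  apply: Rlog_support (nth_pos _ Hj) (Hcond j Hj).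
  by move: Hpos; rewrite -{1}(cat_take_drop (2 * j) s) all_cat => /andP [HP _].
Qed.

Lemma factorization_of_target delta N D1 D2 D3 :
  0 < N -> 0 < D1 -> 0 < D2 -> 0 < D3 ->
  target delta (Rlog x N) (Rlog x D1) (Rlog x D2) (Rlog x D3) ->
  D1 <= N / Rpower x delta /\
  N ^ 2 * D2 * D3 ^ 2 <= Rpower x (1 - delta) /\
  N ^ 2 * D1 * D2 ^ 4 * D3 ^ 3 <= Rpower x (2 - delta) /\
  N * D1 * D2 ^ 5 * D3 ^ 2 <= Rpower x (2 - delta).
Proof.
move=> HN H1 H2 H3.
rewrite -(Rpower_Rlog_gt1 _ HN) -(Rpower_Rlog_gt1 _ H1) -(Rpower_Rlog_gt1 _ H2).
rewrite -(Rpower_Rlog_gt1 _ H3) !Rlog_Rpower.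
move: (Rlog x N) (Rlog x D1) (Rlog x D2) (Rlog x D3) => nu a b c [h1 [h2 [h3 h4]]].
rewrite /Rdiv -Rpower_Ropp !Rpower_pow_mult -!Rpower_plus /=.
by repeat split; apply: Rle_Rpower; lra.
Qed.

End LogScale.

Theorem proposition9p1 :
  forall delta : R, 0 < delta < 1 / 1000 ->
  exists x0 : R, forall x : R, x0 <= x ->
  forall N : R, Rpower x (2 * delta) <= N <= Rpower x (1 / 3 + delta / 2) ->
  forall d : nat, in_Dplus (Rpower x (7 / 12 - 50 * delta)) d ->
  exists d1 d2 d3 : nat,
    (0 < d1)%N /\ (0 < d2)%N /\ (0 < d3)%N /\ d = (d1 * d2 * d3)%N /\
    INR d1 <= N / Rpower x delta /\
    N ^ 2 * INR d2 * INR d3 ^ 2 <= Rpower x (1 - delta) /\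
    N ^ 2 * INR d1 * INR d2 ^ 4 * INR d3 ^ 3 <= Rpower x (2 - delta) /\
    N * INR d1 * INR d2 ^ 5 * INR d3 ^ 2 <= Rpower x (2 - delta).
Proof.
(* the argument is exact, so any threshold x0 > 1 will do *)
move=> delta Hdelta; exists 2 => x Hx N [HN1 HN2] d Hd.
have Hx1 : 1 < x by lra.
have Npos : 0 < N by apply: Rlt_le_trans HN1; apply: exp_pos.
have Htheta : 0 <= 7 / 12 - 50 * delta by lra.
have [s [Hprime [<- Hprof]]] := profile_of_Dplus Hx1 _ _ Htheta Hd.
have Hnu : 2 * delta <= Rlog x N <= 1 / 3 + delta / 2.
  rewrite -(Rlog_Rpower Hx1 (2 * delta)) -(Rlog_Rpower Hx1 (1 / 3 + delta / 2)).
  by split; apply: Rlog_le => //; apply: exp_pos.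
have [cs [Hsz Htarget]] := profile_split _ _ _ Hdelta Hnu Hprof.
have Hpos : all (fun p => 0 < p)%N s by apply: sub_all Hprime => p; exact: prime_gt0.
have part_gt0 k : (0 < prodn (part k cs s))%N by apply/prodn_gt0/all_mask.
have part_exp k : Rlog x (INR (prodn (part k cs s))) =
                  rsum (part k cs (map (fun p => Rlog x (INR p)) s)).
  by rewrite Rlog_prodn ?part_map //; apply: all_mask.
exists (prodn (part L1 cs s)), (prodn (part L2 cs s)), (prodn (part L3 cs s)).
do 3 (split; first exact: part_gt0); split.
  by apply: prodn_parts; rewrite Hsz size_map.
by apply: factorization_of_target; rewrite ?part_exp //; apply: INR_gt0.
Qed.
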